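(* Let $L$ be a planar semimodular lattice of length at least $2$, let $R$ be a rectangular extension of $L$, fix a planar diagram of $R$ and give $L$ the induced subdiagram. Let $S=\mathrm{lside}_R(C_l(L))$. Then: (i) $S$ is a cover-preserving $\{0,1\}$-sublattice of $R$, and $S$ is a distributive lattice; (ii) $R$ is slim if and only if $L$ is slim.
   Context: All lattices are finite. A planar lattice is a finite lattice with a planar Hasse diagram. $\mathrm{J}(L)$ is the set of nonzero join-irreducible elements; $L$ is slim if $\mathrm J(L)$ is the union of two chains. For a planar diagram, $C_l(\cdot)$, $C_r(\cdot)$ denote the left and right boundary chains; for a maximal chain $C$ of $R$, $\mathrm{lside}_R(C)$ is the set of elements of $R$ on the left of $C$ (elements of $C$ included). A rectangular lattice is a planar semimodular lattice $R$ having a planar diagram $D$ such that $C_l(D)\setminus\{0,1\}$ contains exactly one element that is doubly irreducible in $R$ (the left corner $c_l$), $C_r(D)\setminus\{0,1\}$ contains exactly one doubly irreducible element (the right corner $c_r$), and $c_l\wedge c_r=0$, $c_l\vee c_r=1$. A rectangular extension of a planar semimodular lattice $L$ is a lattice $R$ such that: (a) $R$ is rectangular; (b) $L$ is a cover-preserving $\{0,1\}$-sublattice of $R$ (a sublattice containing $0_R,1_R$ such that $x\prec y$ in $L$ implies $x\prec y$ in $R$); (c) every $x\in R$ that has a lower cover outside $L$ has at most two lower covers in $R$. *)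

From HB Require Import structures.
From mathcomp Require Import all_boot all_order.
Set Implicit Arguments. Unset Strict Implicit. Unset Printing Implicit Defensive.
Import Order.TTheory.
Local Open Scope order_scope.

Section LatticeNotions.
Variables (d : Order.disp_t) (T : finTBLatticeType d).

Definition covA (A : {set T}) (x y : T) : bool :=
  [&& x \in A, y \in A, x < y & ~~ [exists z in A, (x < z) && (z < y)]].

Definition sublattice01 (A : {set T}) : Prop :=
  [/\ \bot \in A, \top \in A,
      (forall x y, x \in A -> y \in A -> x `&` y \in A) &
      (forall x y, x \in A -> y \in A -> x `|` y \in A)].

Definition cp_sublattice01 (A : {set T}) : Prop :=
  sublattice01 A /\
  (forall x y, covA A x y -> covA [set: T] x y).

Definition semimodular (A : {set T}) : Prop :=
  forall a b c, a \in A -> b \in A -> c \in A -> covA A a b ->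
    (a `|` c == b `|` c) || covA A (a `|` c) (b `|` c).

Definition distributive_on (A : {set T}) : Prop :=
  forall x y z, x \in A -> y \in A -> z \in A ->
    x `&` (y `|` z) = (x `&` y) `|` (x `&` z).

Definition length_ge2 (A : {set T}) : Prop :=
  exists x y z, [/\ x \in A, y \in A, z \in A, x < y & y < z].

Definition join_irr (A : {set T}) (x : T) : bool :=
  [&& x \in A, x != \bot &
      [forall y in A, forall z in A, (x == y `|` z) ==> ((x == y) || (x == z))]].

Definition meet_irr (A : {set T}) (x : T) : bool :=
  [&& x \in A, x != \top &
      [forall y in A, forall z in A, (x == y `&` z) ==> ((x == y) || (x == z))]].

Definition Jset (A : {set T}) : {set T} := [set x | join_irr A x].

Definition is_chain (C : {set T}) : bool :=
  [forall x in C, forall y in C, (x <= y) || (y <= x)].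

Definition slim (A : {set T}) : Prop :=
  exists C1 C2 : {set T}, [/\ is_chain C1, is_chain C2 & Jset A = C1 :|: C2].

(* A planar diagram of the lattice A, encoded by its "strictly on the left of"
   relation lam on incomparable pairs (Kelly--Rival): lam relates exactly the
   incomparable pairs, in one direction each, and both (< ∪ lam) and
   (< ∪ lam^-1) are transitive (hence strict linear orders, forming a
   2-dimensional realizer of A). *)
Definition is_diagram (A : {set T}) (lam : rel T) : Prop :=
  [/\ (forall x y, x \in A -> y \in A -> lam x y -> ~~ (x <= y) && ~~ (y <= x)),
      (forall x y, x \in A -> y \in A -> ~~ (x <= y) -> ~~ (y <= x) ->
          lam x y || lam y x),
      (forall x y, x \in A -> y \in A -> lam x y -> ~~ lam y x),
      (forall x y z, x \in A -> y \in A -> z \in A ->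
          (x < y) || lam x y -> (y < z) || lam y z -> (x < z) || lam x z) &
      (forall x y z, x \in A -> y \in A -> z \in A ->
          (x < y) || lam y x -> (y < z) || lam z y -> (x < z) || lam z x)].

Definition planar (A : {set T}) : Prop := exists lam, is_diagram A lam.

Definition Cl (A : {set T}) (lam : rel T) : {set T} :=
  [set x in A | ~~ [exists y in A, lam y x]].
Definition Cr (A : {set T}) (lam : rel T) : {set T} :=
  [set x in A | ~~ [exists y in A, lam x y]].

Definition lside (lam : rel T) (C : {set T}) : {set T} :=
  [set x | (x \in C) || [exists c in C, lam x c]].

Definition doubly_irr (x : T) : bool :=
  join_irr [set: T] x && meet_irr [set: T] x.

Definition rectangular : Prop :=
  [/\ planar [set: T], semimodular [set: T] &
    exists lam, is_diagram [set: T] lam /\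
      exists cl cr,
        [/\ [set x in Cl [set: T] lam | [&& x != \bot, x != \top & doubly_irr x]]
              = [set cl],
            [set x in Cr [set: T] lam | [&& x != \bot, x != \top & doubly_irr x]]
              = [set cr],
            cl `&` cr = \bot & cl `|` cr = \top]].

(* T (= R) is a rectangular extension of L *)
Definition rect_extension (L : {set T}) : Prop :=
  [/\ rectangular,
      cp_sublattice01 L &
      forall x, [exists y, covA [set: T] y x && (y \notin L)] ->
        #|[set y | covA [set: T] y x]| <= 2].

End LatticeNotions.

(* Since R is semimodular and covers in L are covers in R, the left boundary
   chain C of L is a maximal chain of R; hence S consists of the elements with
   no element of C strictly on their left, and S is closed under meets, joins
   and covers of R.  Distinct lower covers in S of an element are
   incomparable, so they cannot both lie in L (they would lie on C); hence
   among three of them one lies outside L, and condition (c) shows that every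
   element of S has at most two lower covers in S.  A semimodular lattice with
   this property is distributive: it is lower semimodular, so its
   join-irreducible elements are join-prime.

   Given a planar diagram, a lattice is slim iff it has no three pairwise
   incomparable join-irreducible elements.  Such an antichain in L lifts to R,
   by choosing under each p in J(L) a minimal element of R not below the
   unique lower cover of p.  Conversely, the middle element j of such an
   antichain in R has, on both sides of j, upper covers a and c of its lower
   cover; a, j and c are three lower covers of a `|` c, so they lie in L by
   (c), and they yield an antichain in J(L). *)

From HB Require Import structures.
From mathcomp Require Import all_boot all_order.
Set Implicit Arguments. Unset Strict Implicit. Unset Printing Implicit Defensive.
Import Order.TTheory.
Local Open Scope order_scope.

Section FiniteRelation.
Variables (T : finType) (r : rel T).
Hypotheses (r_trans : transitive r) (r_irr : irreflexive r).

Lemma finrel_ind (P : T -> Prop) :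
  (forall x, (forall y, r y x -> P y) -> P x) -> forall x, P x.
Proof.
move=> IH x; have [n] := ubnP #|[set y | r y x]|; elim: n x => // n IHn x.
rewrite ltnS => le_xn; apply: IH => y ryx; apply: IHn.
apply: leq_trans le_xn; apply: proper_card; apply/properP; split.
  by apply/subsetP=> z; rewrite !inE => rzy; apply: r_trans rzy ryx.
by exists y; rewrite !inE ?ryx ?r_irr.
Qed.

Lemma ex_finrel_min (p : pred T) x0 :
  p x0 -> exists2 x, p x & forall y, p y -> ~~ r y x.
Proof.
elim/finrel_ind: x0 => x IH px.
case: (pickP [pred y | p y && r y x]) => [y /andP[py ryx] | nomin].
  exact: IH ryx py.
by exists x => // y py; apply/negP => ryx; have := nomin y; rewrite /= py ryx.
Qed.

End FiniteRelation.

Section FiniteLattice.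
Variables (d : Order.disp_t) (T : finTBLatticeType d).

Lemma lt_ind (P : T -> Prop) :
  (forall x, (forall y, y < x -> P y) -> P x) -> forall x, P x.
Proof. exact: (@finrel_ind T <%O lt_trans ltxx). Qed.

Lemma ex_lt_min (p : pred T) x0 :
  p x0 -> exists2 x, p x & forall y, p y -> ~~ (y < x).
Proof. exact: (@ex_finrel_min T <%O lt_trans ltxx). Qed.

Lemma ex_lt_max (p : pred T) x0 :
  p x0 -> exists2 x, p x & forall y, p y -> ~~ (x < y).
Proof.
apply: (@ex_finrel_min _ (fun x y => y < x)) => [y x z ltyx ltzy|x].
  exact: lt_trans ltzy ltyx.
exact: ltxx.
Qed.

Section CoversInSet.
Variable A : {set T}.

Lemma covAP x y : reflect
  [/\ x \in A, y \in A, x < y & forall z, z \in A -> x < z -> z < y -> False]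
  (covA A x y).
Proof.
apply: (iffP and4P) => [[xA yA lt_xy /existsPn nz]|[xA yA lt_xy nz]].
  by split=> // z zA lt_xz lt_zy; move: (nz z); rewrite zA lt_xz lt_zy.
split=> //; apply/existsPn => z.
by apply/negP => /and3P[zA lt_xz lt_zy]; apply: nz lt_zy.
Qed.

Lemma covA_lt x y : covA A x y -> x < y. Proof. by case/covAP. Qed.
Lemma covA_inl x y : covA A x y -> x \in A. Proof. by case/covAP. Qed.
Lemma covA_inr x y : covA A x y -> y \in A. Proof. by case/covAP. Qed.

Lemma covA_eq a x y : covA A a x -> y \in A -> a < y -> y <= x -> y = x.
Proof.
case/covAP=> _ _ _ nz yA lt_ay; rewrite le_eqVlt => /predU1P[//|lt_yx].
by case: (nz y yA lt_ay lt_yx).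
Qed.

Lemma lower_covA_nle a b x :
  covA A a x -> covA A b x -> a != b -> ~~ (a <= b).
Proof.
move=> ax bx neq_ab; apply/negP => le_ab.
have lt_ab : a < b by rewrite lt_neqAle neq_ab le_ab.
by have := covA_lt bx; rewrite (covA_eq ax (covA_inl bx) lt_ab (ltW (covA_lt bx))) ltxx.
Qed.

Lemma meet_upper_covA o u v : covA A o u -> covA A o v -> u != v ->
  u `&` v \in A -> u `&` v = o.
Proof.
move=> ou ov neq_uv uvA.
have : o <= u `&` v by rewrite lexI !ltW ?(covA_lt ou) ?(covA_lt ov).
rewrite le_eqVlt => /predU1P[-> //|lt_o].
have def_u := covA_eq ou uvA lt_o (leIl u v).
have le_uv : u <= v by rewrite -def_u leIr.
by rewrite (covA_eq ov (covA_inr ou) (covA_lt ou) le_uv) eqxx in neq_uv.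
Qed.

Lemma ex_lower_covA z x : z \in A -> x \in A -> z < x ->
  exists2 y, covA A y x & z <= y.
Proof.
move=> zA xA lt_zx; pose p := [pred w | [&& w \in A, z <= w & w < x]].
have pz : p z by rewrite /= zA lexx.
have [y /and3P[yA le_zy lt_yx] ymax] := ex_lt_max pz.
exists y => //; apply/covAP; split=> // w wA lt_yw lt_wx.
by move: (ymax w); rewrite /p /= wA lt_wx (le_trans le_zy (ltW lt_yw)) lt_yw => /(_ isT).
Qed.

Lemma ex_upper_covA z x : z \in A -> x \in A -> z < x ->
  exists2 y, covA A z y & y <= x.
Proof.
move=> zA xA lt_zx; pose p := [pred w | [&& w \in A, z < w & w <= x]].
have px : p x by rewrite /= xA lt_zx lexx.
have [y /and3P[yA lt_zy le_yx] ymin] := ex_lt_min px.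
exists y => //; apply/covAP; split=> // w wA lt_zw lt_wy.
by move: (ymin w); rewrite /p /= wA lt_zw (le_trans (ltW lt_wy) le_yx) lt_wy => /(_ isT).
Qed.

Lemma join_irr_eq j y z : join_irr A j -> y \in A -> z \in A ->
  j = y `|` z -> j = y \/ j = z.
Proof.
case/and3P=> _ _ /forall_inP/(_ y) irr yA zA def_j.
by move/forall_inP/(_ z zA): (irr yA); rewrite def_j eqxx => /orP[] /eqP; [left|right].
Qed.

Lemma ex_join_irr_nle e o : e \in A -> ~~ (e <= o) ->
  exists k, [/\ join_irr A k, k <= e & ~~ (k <= o)].
Proof.
move=> eA nle_eo; pose p := [pred w | [&& w \in A, w <= e & ~~ (w <= o)]].
have pe : p e by rewrite /= eA lexx.
have [k /and3P[kA le_ke nle_ko] kmin] := ex_lt_min pe.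
have below_o y : y \in A -> y < k -> y <= o.
  move=> yA lt_yk; move: (lt_yk); apply: contraTT => nle_yo; apply: kmin.
  by rewrite /= yA (le_trans (ltW lt_yk) le_ke).
exists k; split=> //; apply/and3P; split=> //.
  by apply: contraNneq nle_ko => ->; apply: le0x.
apply/forall_inP => y yA; apply/forall_inP => z zA; apply/implyP => /eqP def_k.
apply: contraNT nle_ko; rewrite negb_or => /andP[nky nkz].
rewrite def_k leUx !below_o //.
- by rewrite lt_def nkz def_k leUr.
- by rewrite lt_def nky def_k leUl.
Qed.

Lemma join_irr_lower_cover j : \bot \in A ->
  (forall x y, x \in A -> y \in A -> x `|` y \in A) -> join_irr A j ->
  exists2 o, covA A o j & forall z, z \in A -> z < j -> z <= o.
Proof.
move=> botA joinA jj; have /and3P[jA nj0 _] := jj.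
have lt0j : \bot < j by rewrite lt0x.
have [o oj _] := ex_lower_covA botA jA lt0j.
exists o => // z zA lt_zj.
have ozA := joinA _ _ (covA_inl oj) zA.
have [def_j|ne] := eqVneq (o `|` z) j.
  case: (join_irr_eq jj (covA_inl oj) zA (esym def_j)) => def.
    by have := covA_lt oj; rewrite -def ltxx.
  by move: lt_zj; rewrite -def ltxx.
have le_ozj : o `|` z <= j by rewrite leUx (ltW (covA_lt oj)) (ltW lt_zj).
apply: contraNT ne => nle_zo; apply/eqP; apply: covA_eq oj ozA _ le_ozj.
by rewrite lt_def eq_joinl nle_zo leUl.
Qed.

End CoversInSet.

Lemma covA_sub (A B : {set T}) x y : A \subset B -> x \in A -> y \in A ->
  covA B x y -> covA A x y.
Proof.
move=> /subsetP sAB xA yA /covAP[_ _ lt_xy nz].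
by apply/covAP; split=> // z /sAB; apply: nz.
Qed.

End FiniteLattice.

Section Semimodular.
Variables (d : Order.disp_t) (T : finTBLatticeType d) (S : {set T}).
Hypothesis smS : semimodular S.

Lemma semimodular_covA_join a b c :
  covA S a b -> c \in S -> a <= c -> ~~ (b <= c) -> covA S c (b `|` c).
Proof.
move=> ab cS le_ac nle_bc; have := smS (covA_inl ab) (covA_inr ab) cS ab.
by rewrite (join_r le_ac) => /orP[/eqP def_c|//]; rewrite def_c leUl in nle_bc.
Qed.

Lemma covA_join_upper_covers o u v :
  covA S o u -> covA S o v -> u != v -> covA S u (v `|` u).
Proof.
move=> ou ov neq_uv; have nle_vu : ~~ (v <= u).
  apply: contra neq_uv => le_vu.
  by rewrite (covA_eq ou (covA_inr ov) (covA_lt ov) le_vu).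
exact: semimodular_covA_join ov (covA_inr ou) (ltW (covA_lt ou)) nle_vu.
Qed.

End Semimodular.

Section Distributive.
Variables (d : Order.disp_t) (T : finTBLatticeType d) (S : {set T}).
Hypotheses (botS : \bot \in S) (smS : semimodular S).
Hypothesis meetS : forall x y, x \in S -> y \in S -> x `&` y \in S.
Hypothesis joinS : forall x y, x \in S -> y \in S -> x `|` y \in S.
Hypothesis two_lower_covers : forall x a b e,
  covA S a x -> covA S b x -> covA S e x -> [|| a == b, a == e | b == e].

Lemma ex_covA_join_below y b : y \in S -> b \in S -> ~~ (b <= y) ->
  exists2 q, q <= b & covA S y (q `|` y).
Proof.
move=> yS bS nle_by; pose p := [pred w | [&& w \in S, w <= b & ~~ (w <= y)]].
have pb : p b by rewrite /= bS lexx.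
have [q /and3P[qS le_qb nle_qy] qmin] := ex_lt_min pb.
have lt0q : \bot < q by rewrite lt0x; apply: contraNneq nle_qy => ->; apply: le0x.
have [q' q'q _] := ex_lower_covA botS qS lt0q.
have le_q'y : q' <= y.
  move: (covA_lt q'q); apply: contraTT => nle_q'y; apply: qmin.
  by rewrite /p /= (covA_inl q'q) (le_trans (ltW (covA_lt q'q)) le_qb).
by exists q => //; apply: (semimodular_covA_join smS q'q yS le_q'y nle_qy).
Qed.

Lemma covA_meet_lower_covers a b x :
  covA S a x -> covA S b x -> a != b -> covA S (a `&` b) a.
Proof.
move=> ax bx neq_ab; have [aS bS] := (covA_inl ax, covA_inl bx).
have nle_ab := lower_covA_nle ax bx neq_ab.
apply/covAP; split=> // [|| z zS lt_abz lt_za]; first exact: meetS.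
  by rewrite lt_def eq_sym eq_meetl nle_ab leIl.
have [a' a'a le_za'] := ex_lower_covA zS aS lt_za.
have nle_a'b : ~~ (a' <= b).
  apply: contraTN lt_abz => le_a'b; rewrite le_gtF // lexI.
  by rewrite (le_trans le_za' (ltW (covA_lt a'a))) (le_trans le_za' le_a'b).
have nle_ba' : ~~ (b <= a').
  apply: contra (lower_covA_nle bx ax _) => [le_ba'|]; last by rewrite eq_sym.
  exact: le_trans le_ba' (ltW (covA_lt a'a)).
(* The cover e of a' built from some q <= b is a third lower cover of x. *)
have [q le_qb a'e] := ex_covA_join_below (covA_inl a'a) bS nle_ba'.
set e := q `|` a' in a'e.
have neq_ea : e != a.
  apply/eqP => def_e; have le_qa' : q <= a'.
    apply: le_trans le_za'; apply: le_trans (ltW lt_abz).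
    by rewrite lexI -def_e leUl le_qb.
  by have := covA_lt a'e; rewrite /e (join_r le_qa') ltxx.
have ae : covA S a (e `|` a).
  by apply: (covA_join_upper_covers smS a'a a'e); rewrite eq_sym.
have def_x : e `|` a = x.
  apply: (covA_eq ax (covA_inr ae) (covA_lt ae)).
  have [le_a'a le_ax] := (ltW (covA_lt a'a), ltW (covA_lt ax)).
  by rewrite /e !leUx le_ax (le_trans le_qb (ltW (covA_lt bx))) (le_trans le_a'a le_ax).
have ex : covA S e x.
  by rewrite -def_x joinC; apply: (covA_join_upper_covers smS a'e a'a neq_ea).
case/or3P: (two_lower_covers ax bx ex) => /eqP def.
- by rewrite def eqxx in neq_ab.
- by rewrite def eqxx in neq_ea.
- by rewrite def /e leUr in nle_a'b.
Qed.

Lemma covA_meet_lower a x y :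
  covA S a x -> y \in S -> y <= x -> ~~ (y <= a) -> covA S (a `&` y) y.
Proof.
elim/lt_ind: x a => x IH a ax yS le_yx nle_ya.
have [->|neq_yx] := eqVneq y x; first by rewrite (meet_l (ltW (covA_lt ax))).
have lt_yx : y < x by rewrite lt_neqAle neq_yx le_yx.
have [b bx le_yb] := ex_lower_covA yS (covA_inr ax) lt_yx.
have neq_ba : b != a by apply: contraNneq nle_ya => <-.
have := IH b (covA_lt bx) _ (covA_meet_lower_covers bx ax neq_ba) yS le_yb.
by rewrite lexI le_yb (meetC b a) -meetA (meet_r le_yb); apply.
Qed.

Lemma join_meet_lower_cover y z y' :
  covA S y' (y `|` z) -> y \in S -> z \in S -> y <= y' -> y `|` (y' `&` z) = y'.
Proof.
move=> y'w yS zS le_yy'; have lt_y'w := covA_lt y'w.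
have nle_zy' : ~~ (z <= y').
  by apply: contraTN lt_y'w => le_zy'; rewrite le_gtF // leUx le_yy'.
have c := covA_meet_lower y'w zS (leUr _ _) nle_zy'.
have le_uy' : y `|` (y' `&` z) <= y' by rewrite leUx le_yy' leIl.
have := smS (covA_inl c) (covA_inr c) yS c; rewrite !(joinC _ y).
case/orP=> [/eqP def_w | c'].
  by rewrite def_w (lt_geF lt_y'w) in le_uy'.
move: le_uy'; rewrite le_eqVlt => /predU1P[//|lt_uy'].
have def_y' := covA_eq c' (covA_inl y'w) lt_uy' (ltW lt_y'w).
by rewrite def_y' ltxx in lt_y'w.
Qed.

Lemma join_irr_prime j y z : join_irr S j -> y \in S -> z \in S ->
  j <= y `|` z -> (j <= y) || (j <= z).
Proof.
move=> jj; have /and3P[jS _ _] := jj.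
move def_w: (y `|` z) => w; elim/lt_ind: w y z def_w => w IH y z def_w yS zS le_jw.
apply/contraT; rewrite negb_or => /andP[nle_jy nle_jz].
have lt_w u : u <= w -> ~~ (j <= u) -> u < w.
  by move=> le_uw nle_ju; rewrite lt_neqAle le_uw andbT; apply: contraNneq nle_ju => ->.
have wS : w \in S by rewrite -def_w joinS.
have lt_jw : j < w.
  rewrite lt_neqAle le_jw andbT; apply/eqP => def_j.
  case: (join_irr_eq jj yS zS (etrans def_j (esym def_w))) => def.
    by rewrite def lexx in nle_jy.
  by rewrite def lexx in nle_jz.
have [v vw le_jv] := ex_lower_covA jS wS lt_jw.
have [le_yw le_zw] : y <= w /\ z <= w by rewrite -def_w leUl leUr.
have [y' y'w le_yy'] := ex_lower_covA yS wS (lt_w y le_yw nle_jy).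
have [z' z'w le_zz'] := ex_lower_covA zS wS (lt_w z le_zw nle_jz).
have split_join u t u' : u \in S -> t \in S -> u `|` t = w ->
    ~~ (j <= u) -> ~~ (j <= t) -> covA S u' w -> u <= u' -> j <= u' -> false.
  move=> uS tS def_w' nle_ju nle_jt u'w le_uu' le_ju'.
  have def_u' := join_meet_lower_cover (etrans (congr1 _ def_w') u'w) uS tS le_uu'.
  have := IH u' (covA_lt u'w) u (u' `&` t) def_u' uS (meetS (covA_inl u'w) tS) le_ju'.
  by rewrite (negbTE nle_ju) lexI le_ju' (negbTE nle_jt).
case/or3P: (two_lower_covers vw y'w z'w) => /eqP def.
- by apply: (split_join y z y' yS zS def_w nle_jy nle_jz y'w le_yy'); rewrite -def.
- apply: (split_join z y z' zS yS _ nle_jz nle_jy z'w le_zz'); last by rewrite -def.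
  by rewrite joinC.
- have : w <= y' by rewrite -def_w leUx le_yy' def le_zz'.
  by rewrite (lt_geF (covA_lt y'w)).
Qed.

Lemma le_of_join_irr_le v t : v \in S ->
  (forall j, join_irr S j -> j <= v -> j <= t) -> v <= t.
Proof.
elim/lt_ind: v => v IH vS le_jt.
have [->|nv0] := eqVneq v \bot; first exact: le0x.
have [|] := boolP (join_irr S v); first by move/le_jt; apply.
rewrite /join_irr vS nv0 /= => /forall_inPn[y yS /forall_inPn[z zS]].
rewrite negb_imply negb_or => /and3P[/eqP def_v nvy nvz].
have lt_yv : y < v by rewrite lt_def nvy def_v leUl.
have lt_zv : z < v by rewrite lt_def nvz def_v leUr.
rewrite def_v leUx; apply/andP; split.
- apply: (IH y lt_yv yS) => j jj le_jy; exact: le_jt jj (le_trans le_jy (ltW lt_yv)).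
- apply: (IH z lt_zv zS) => j jj le_jz; exact: le_jt jj (le_trans le_jz (ltW lt_zv)).
Qed.

Lemma distributive_of_two_lower_covers : distributive_on S.
Proof.
move=> x y z xS yS zS; apply/eqP; rewrite eq_le leUx !leI2 ?leUl ?leUr // !andbT.
apply: le_of_join_irr_le => [|j jj]; first by rewrite meetS ?joinS.
rewrite lexI => /andP[le_jx /(join_irr_prime jj yS zS)/orP[le_jy|le_jz]].
- by rewrite (le_trans _ (leUl _ _)) // lexI le_jx le_jy.
- by rewrite (le_trans _ (leUr _ _)) // lexI le_jx le_jz.
Qed.

End Distributive.

Section Antichains.
Variables (d : Order.disp_t) (T : finTBLatticeType d).

Definition Jantichain3 (A : {set T}) : Prop := exists p q r,
  [/\ p \in Jset A, q \in Jset A, r \in Jset A & [&& p >< q, p >< r & q >< r]].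

Lemma slim_noJantichain3 (A : {set T}) : slim A -> ~ Jantichain3 A.
Proof.
case=> [K1 [K2 [chK1 chK2 defJ]]] [p [q [r [pJ qJ rJ /and3P[pq pr qr]]]]].
have inK x : x \in Jset A -> (x \in K1) || (x \in K2) by rewrite defJ inE.
have ncmp K x y : is_chain K -> x \in K -> y \in K -> x >< y -> False.
  move=> /forall_inP chK xK yK /negP; apply.
  by move/forall_inP: (chK x xK); apply.
case/orP: (inK p pJ) => hp; case/orP: (inK q qJ) => hq; case/orP: (inK r rJ) => hr;
  solve [ exact: ncmp chK1 hp hq pq | exact: ncmp chK1 hp hr pr
        | exact: ncmp chK1 hq hr qr | exact: ncmp chK2 hp hq pq
        | exact: ncmp chK2 hp hr pr | exact: ncmp chK2 hq hr qr ].
Qed.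

Lemma incomparable_of_nle_meet (u v ku kv : T) : ku <= u -> kv <= v ->
  ~~ (ku <= u `&` v) -> ~~ (kv <= v `&` u) -> ku >< kv.
Proof.
move=> le_ku le_kv nle_ku nle_kv; apply/norP; split.
- by apply: contra nle_ku => le_kukv; rewrite lexI le_ku (le_trans le_kukv le_kv).
- by apply: contra nle_kv => le_kvku; rewrite lexI le_kv (le_trans le_kvku le_ku).
Qed.

End Antichains.

Section Diagram.
Variables (d : Order.disp_t) (T : finTBLatticeType d) (lam : rel T).

Lemma ClP (A : {set T}) x :
  reflect (x \in A /\ forall y, y \in A -> ~~ lam y x) (x \in Cl A lam).
Proof. by rewrite inE; apply: (iffP andP) => -[xA nl]; split=> //; apply/exists_inPn. Qed.

Hypothesis diagT : is_diagram [set: T] lam.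

Lemma lam_incomparable x y : lam x y -> x >< y.
Proof.
case: diagT => inc _ _ _ _ /(inc x y (in_setT x) (in_setT y))/andP[nle nge].
exact/norP.
Qed.

Lemma lam_nle x y : lam x y -> ~~ (x <= y).
Proof. by case/lam_incomparable/norP. Qed.

Lemma lam_nge x y : lam x y -> ~~ (y <= x).
Proof. by case/lam_incomparable/norP. Qed.

Lemma lam_total x y : x >< y -> lam x y || lam y x.
Proof. by case: diagT => _ tot _ _ _ /norP[]; apply: tot; rewrite inE. Qed.

Lemma lam_asym x y : lam x y -> ~~ lam y x.
Proof. by case: diagT => _ _ asym _ _; apply: asym; rewrite inE. Qed.

Lemma lam_neq x y : lam x y -> x != y.
Proof. by move/lam_nle; apply: contraNneq => ->. Qed.

Lemma lam_irr x : ~~ lam x x.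
Proof. by apply/negP => /lam_neq; rewrite eqxx. Qed.

Definition lt_left x y := (x < y) || lam x y.
Definition lt_right x y := (x < y) || lam y x.

Lemma lt_left_trans : transitive lt_left.
Proof. by case: diagT => _ _ _ tr _ y x z; apply: tr; rewrite inE. Qed.

Lemma lt_right_trans : transitive lt_right.
Proof. by case: diagT => _ _ _ _ tr y x z; apply: tr; rewrite inE. Qed.

Lemma lt_left_irr : irreflexive lt_left.
Proof. by move=> x; rewrite /lt_left ltxx (negbTE (lam_irr x)). Qed.

Lemma le_lt_left_trans a b c : a <= b -> lt_left b c -> lt_left a c.
Proof.
rewrite le_eqVlt => /predU1P[-> //|lt_ab] bc.
by apply: (@lt_left_trans b a c _ bc); rewrite /lt_left lt_ab.
Qed.

Lemma lt_left_le_trans a b c : lt_left a b -> b <= c -> lt_left a c.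
Proof.
move=> ab; rewrite le_eqVlt => /predU1P[<- //|lt_bc].
by apply: (@lt_left_trans b a c ab); rewrite /lt_left lt_bc.
Qed.

Lemma le_lt_right_trans a b c : a <= b -> lt_right b c -> lt_right a c.
Proof.
rewrite le_eqVlt => /predU1P[-> //|lt_ab] bc.
by apply: (@lt_right_trans b a c _ bc); rewrite /lt_right lt_ab.
Qed.

Lemma lt_right_le_trans a b c : lt_right a b -> b <= c -> lt_right a c.
Proof.
move=> ab; rewrite le_eqVlt => /predU1P[<- //|lt_bc].
by apply: (@lt_right_trans b a c ab); rewrite /lt_right lt_bc.
Qed.

Lemma lt_left_lamF x y : lam y x -> lt_left x y = false.
Proof.
move=> yx; rewrite /lt_left (negbTE (lam_asym yx)) orbF.
by rewrite lt_neqAle (negbTE (lam_nge yx)) andbF.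
Qed.

Lemma lt_right_lamF x y : lam x y -> lt_right x y = false.
Proof.
move=> xy; rewrite /lt_right (negbTE (lam_asym xy)) orbF.
by rewrite lt_neqAle (negbTE (lam_nle xy)) andbF.
Qed.

Lemma lt_of_lam_le c z u : lam c z -> z <= u -> ~~ lam c u -> c < u.
Proof.
move=> cz le_zu ncu.
have : lt_left c u by apply: (lt_left_le_trans _ le_zu); rewrite /lt_left cz orbT.
by rewrite /lt_left (negbTE ncu) orbF.
Qed.

Lemma lt_of_le_lam c z u : u <= z -> lam c z -> ~~ lam c u -> u < c.
Proof.
move=> le_uz cz ncu.
have : lt_right u c by apply: (le_lt_right_trans le_uz); rewrite /lt_right cz orbT.
by rewrite /lt_right (negbTE ncu) orbF.
Qed.

Lemma lam_trans x y z : lam x y -> lam y z -> lam x z.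
Proof.
move=> xy yz.
have : lt_left x z by apply: (@lt_left_trans y); rewrite /lt_left ?xy ?yz orbT.
have : lt_right z x by apply: (@lt_right_trans y); rewrite /lt_right ?xy ?yz orbT.
rewrite /lt_left /lt_right => /orP[lt_zx|//] /orP[lt_xz|//].
by have := lt_trans lt_xz lt_zx; rewrite ltxx.
Qed.

Lemma is_diagram_flip : is_diagram [set: T] (fun x y => lam y x).
Proof.
split=> x y.
- by move=> _ _ yx; rewrite (lam_nle yx) (lam_nge yx).
- by move=> _ _ nle_xy nle_yx; rewrite orbC lam_total //; apply/norP.
- by move=> _ _; apply: lam_asym.
- by move=> z _ _ _; apply: lt_right_trans.
- by move=> z _ _ _; apply: lt_left_trans.
Qed.

Lemma lam_of_comparable x y z : lam x y -> y >< z -> x >=< z -> lam z y.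
Proof.
move=> xy inc_yz; case/orP: (lam_total inc_yz) => [yz|//] /orP[le_xz|le_zx].
- have : lt_right y z by apply: (lt_right_le_trans _ le_xz); rewrite /lt_right xy orbT.
  by rewrite lt_right_lamF.
- have : lt_left y x by apply: (lt_left_le_trans _ le_zx); rewrite /lt_left yz orbT.
  by rewrite lt_left_lamF.
Qed.

Lemma le_join_of_lam a j c : lam a j -> lam j c -> j <= a `|` c.
Proof.
move=> aj jc; apply/contraT => nle_j.
have nge_j : ~~ (a `|` c <= j).
  by apply: contra (lam_nle aj) => le_acj; apply: le_trans (leUl a c) le_acj.
case/orP: (lam_total (introT norP (conj nle_j nge_j))) => lam_acj.
- have : lt_right (a `|` c) j by rewrite /lt_right lam_acj orbT.
  by move/(le_lt_right_trans (leUl a c)); rewrite lt_right_lamF.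
- have : lt_left (a `|` c) j by rewrite /lt_left lam_acj orbT.
  by move/(le_lt_left_trans (leUr c a)); rewrite lt_left_lamF.
Qed.

Lemma ex_lam_lower_cover_below j y : lam y j ->
  exists y0 y', [/\ lam y0 j, covA [set: T] y' y0 & y' < j].
Proof.
move=> yj; have [y0 y0j y0min] := @ex_lt_min _ _ (lam^~ j) y yj.
have lt0y0 : \bot < y0.
  by rewrite lt0x; apply: contraNneq (lam_nle y0j) => ->; apply: le0x.
have [y' y'y0 _] := ex_lower_covA (in_setT _) (in_setT _) lt0y0.
exists y0, y'; split=> //; have lt_y'y0 := covA_lt y'y0.
have nle_jy' : ~~ (j <= y').
  by apply: contra (lam_nge y0j) => le_jy'; apply: le_trans le_jy' (ltW lt_y'y0).
have le_y'j : y' <= j.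
  apply/contraT => nle_y'j.
  have inc : j >< y' by apply/norP.
  have := y0min y' (lam_of_comparable y0j inc (ge_comparable (ltW lt_y'y0))).
  by rewrite lt_y'y0.
by rewrite lt_neqAle le_y'j andbT; apply: contraNneq nle_jy' => ->.
Qed.

Lemma Cl_comparable (A : {set T}) x y :
  x \in Cl A lam -> y \in Cl A lam -> x >=< y.
Proof.
move=> /ClP[xA nlx] /ClP[yA nly]; apply/contraT => /lam_total/orP[xy|yx].
- by move: (nly x xA); rewrite xy.
- by move: (nlx y yA); rewrite yx.
Qed.

Lemma Cl_bot (A : {set T}) : \bot \in A -> \bot \in Cl A lam.
Proof. by move=> botA; apply/ClP; split=> // y _; apply: (contraTN (@lam_nge y \bot)). Qed.

Lemma Cl_top (A : {set T}) : \top \in A -> \top \in Cl A lam.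
Proof. by move=> topA; apply/ClP; split=> // y _; apply: (contraTN (@lam_nle y \top)). Qed.

Lemma lam_Jantichain3 (A : {set T}) x y z :
  x \in Jset A -> y \in Jset A -> z \in Jset A -> lam x y -> lam y z -> Jantichain3 A.
Proof.
move=> xJ yJ zJ xy yz; exists x, y, z; split=> //.
by rewrite !lam_incomparable // (lam_trans xy yz).
Qed.

Lemma slimE (A : {set T}) : slim A <-> ~ Jantichain3 A.
Proof.
split; first exact: slim_noJantichain3.
move=> noJ3; exists [set x in Jset A | ~~ [exists y in Jset A, lam y x]],
  [set x in Jset A | [exists y in Jset A, lam y x]]; split.
- apply/forall_inP => x; rewrite inE => /andP[xJ /exists_inPn nlx].
  apply/forall_inP => y; rewrite inE => /andP[yJ /exists_inPn nly].
  apply/contraT => /lam_total/orP[xy|yx].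
  + by move: (nly x xJ); rewrite xy.
  + by move: (nlx y yJ); rewrite yx.
- apply/forall_inP => x; rewrite inE => /andP[xJ /exists_inP[x' x'J x'x]].
  apply/forall_inP => y; rewrite inE => /andP[yJ /exists_inP[y' y'J y'y]].
  apply/contraT => /lam_total/orP[xy|yx]; case: noJ3.
  + exact: lam_Jantichain3 x'J xJ yJ x'x xy.
  + exact: lam_Jantichain3 y'J yJ xJ y'y yx.
- by apply/setP => x; rewrite !inE -andb_orr orNb andbT.
Qed.

Lemma lam_middle (A : {set T}) p q r : p \in A -> q \in A -> r \in A ->
  p >< q -> p >< r -> q >< r -> exists j y z, [/\ j \in A, lam y j & lam j z].
Proof.
move=> pA qA rA /lam_total/orP[pq|qp] /lam_total/orP[pr|rp] /lam_total/orP[qr|rq].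
all: first [ by exists p, q, r | by exists p, r, q | by exists q, p, r
           | by exists q, r, p | by exists r, p, q | by exists r, q, p ].
Qed.

Section SemimodularDiagram.
Hypothesis smT : semimodular [set: T].

Lemma ex_lam_upper_cover j o y : join_irr [set: T] j -> covA [set: T] o j ->
  (forall z, z < j -> z <= o) -> lam y j -> exists2 a, covA [set: T] o a & lam a j.
Proof.
move=> jj oj below_o yj.
have [y0 [y' [y0j y'y0 lt_y'j]]] := ex_lam_lower_cover_below yj.
have nle_y0o : ~~ (y0 <= o).
  by apply: contra (lam_nle y0j) => le_y0o; apply: le_trans le_y0o (ltW (covA_lt oj)).
have oa := semimodular_covA_join smT y'y0 (in_setT o) (below_o y' lt_y'j) nle_y0o.
exists (y0 `|` o) => //.
have neq_aj : y0 `|` o != j.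
  apply/eqP => def_j.
  case: (join_irr_eq jj (in_setT _) (in_setT _) (esym def_j)) => def.
  - by rewrite -def (negbTE (lam_irr j)) in y0j.
  - by have := covA_lt oj; rewrite -def ltxx.
apply: (lam_of_comparable y0j); last exact: le_comparable (leUl _ _).
apply/norP; split.
- apply: contra neq_aj => le_ja.
  by rewrite (covA_eq oa (in_setT _) (covA_lt oj) le_ja).
- apply: contraTN (covA_lt oa) => le_aj.
  by rewrite le_gtF // below_o // lt_neqAle neq_aj le_aj.
Qed.

Lemma lam_upper_covers_join a j c o :
  covA [set: T] o a -> covA [set: T] o j -> covA [set: T] o c ->
  lam a j -> lam j c ->
  [/\ covA [set: T] a (a `|` c), covA [set: T] j (a `|` c) & covA [set: T] c (a `|` c)].
Proof.
move=> oa oj oc aj jc; have ac := lam_trans aj jc.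
have aw : covA [set: T] a (a `|` c).
  by rewrite joinC; apply: (covA_join_upper_covers smT oa oc (lam_neq ac)).
have aja := covA_join_upper_covers smT oa oj (lam_neq aj).
have def_w : j `|` a = a `|` c.
  apply: (covA_eq aw (in_setT _) (covA_lt aja)).
  by rewrite leUx le_join_of_lam // leUl.
split=> //.
- rewrite -def_w joinC; apply: (covA_join_upper_covers smT oj oa).
  by rewrite eq_sym lam_neq.
- by apply: (covA_join_upper_covers smT oc oa); rewrite eq_sym lam_neq.
Qed.

End SemimodularDiagram.

End Diagram.

Section RectangularExtension.
Variables (d : Order.disp_t) (T : finTBLatticeType d) (lam : rel T) (L : {set T}).
Hypotheses (diagT : is_diagram [set: T] lam) (smT : semimodular [set: T]).
Hypotheses (botL : \bot \in L) (topL : \top \in L).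
Hypothesis meetL : forall x y, x \in L -> y \in L -> x `&` y \in L.
Hypothesis joinL : forall x y, x \in L -> y \in L -> x `|` y \in L.
Hypothesis covL : forall x y, covA L x y -> covA [set: T] x y.
Hypothesis few_lower_covers : forall x,
  [exists y, covA [set: T] y x && (y \notin L)] -> #|[set y | covA [set: T] y x]| <= 2.

Lemma lower_covers_in_L x a b e :
  covA [set: T] a x -> covA [set: T] b x -> covA [set: T] e x ->
  a != b -> a != e -> b != e -> [&& a \in L, b \in L & e \in L].
Proof.
move=> ax bx ex neq_ab neq_ae neq_be; apply/contraT; rewrite !negb_and => outL.
have : #|[set y | covA [set: T] y x]| <= 2.
  apply: few_lower_covers; apply/existsP.
  by case/or3P: outL => ?; [exists a | exists b | exists e]; apply/andP.
have sub : a |: (b |: [set e]) \subset [set y | covA [set: T] y x].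
  by apply/subsetP => y; rewrite !inE => /or3P[] /eqP ->.
have card3 : #|a |: (b |: [set e])| = 3.
  by rewrite !cardsU1 cards1 !inE negb_or neq_ab neq_ae neq_be.
by move/(leq_trans (subset_leq_card sub)); rewrite card3.
Qed.

Let C := Cl L lam.
Let S := lside lam C.

Lemma Cl_succ c : c \in C -> c != \top -> exists2 u, u \in C & covA [set: T] c u.
Proof.
move=> /[dup] cC /ClP[cL nlc] neq_c1.
have lt_c1 : c < \top by rewrite lt_neqAle neq_c1 lex1.
have [u0 cu0 _] := ex_upper_covA cL topL lt_c1.
(* The leftmost upper cover of c in L stays on the left boundary. *)
have [u cu umin] := ex_finrel_min (lt_left_trans diagT) (lt_left_irr diagT) cu0.
exists u; last exact: covL cu.
have lt_cu := covA_lt cu; apply/ClP; split=> [|y yL]; first exact: covA_inr cu.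
apply/negP => yu; have [le_yc|nle_yc] := boolP (y <= c).
  by move: (lam_nle diagT yu); rewrite (le_trans le_yc (ltW lt_cu)).
have [le_cy|nle_cy] := boolP (c <= y).
  have lt_cy : c < y by rewrite lt_neqAle le_cy andbT; apply: contraNneq nle_yc => ->.
  have [v cv le_vy] := ex_upper_covA cL yL lt_cy.
  by move: (umin v cv); rewrite (le_lt_left_trans diagT le_vy) // /lt_left yu orbT.
have inc_cy : c >< y by apply/norP.
case/orP: (lam_total diagT inc_cy) => [cy|yc]; last by move: (nlc y yL); rewrite yc.
have : lt_right lam c y.
  by apply: (@lt_right_trans _ _ _ diagT u); rewrite /lt_right ?lt_cu ?yu ?orbT.
by rewrite lt_right_lamF.
Qed.

Lemma Cl_maximal x : (forall c, c \in C -> x >=< c) -> x \in C.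
Proof.
move=> cmp; have botC : \bot \in C := Cl_bot diagT botL.
have /ex_lt_max[c1 /andP[c1C le_c1x] c1max] : [pred c | (c \in C) && (c <= x)] \bot.
  by rewrite /= botC le0x.
have [<- //|neq_c1x] := eqVneq c1 x.
have lt_c1x : c1 < x by rewrite lt_neqAle neq_c1x.
have neq_c1 : c1 != \top by apply: contraTneq lt_c1x => ->; rewrite le_gtF ?lex1.
have [u uC c1u] := Cl_succ c1C neq_c1.
case/orP: (cmp u uC) => [le_xu|le_ux].
- have [-> //|neq_xu] := eqVneq x u.
  have lt_xu : x < u by rewrite lt_neqAle neq_xu le_xu.
  by case/covAP: c1u => _ _ _ /(_ x (in_setT x) lt_c1x lt_xu).
- by move: (c1max u); rewrite /= uC le_ux (covA_lt c1u) => /(_ isT).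
Qed.

Lemma mem_lside x : (x \in S) = [forall c in C, ~~ lam c x].
Proof.
apply/idP/forall_inP => [|nl]; rewrite /S /lside inE.
- case/orP=> [/ClP[_ nlx] c /ClP[cL _]|/exists_inP[c0 c0C xc0] c cC]; first exact: nlx.
  apply/negP => cx; move: (lam_incomparable diagT (lam_trans diagT cx xc0)).
  by rewrite (Cl_comparable diagT cC c0C).
- apply/contraT; rewrite negb_or => /andP[nxC /exists_inPn nr].
  suff : x \in C by rewrite (negbTE nxC).
  apply: Cl_maximal => c cC; apply/contraT => /(lam_total diagT)/orP[xc|cx].
  + by move: (nr c cC); rewrite xc.
  + by move: (nl c cC); rewrite cx.
Qed.

Lemma mem_lside_Cl c : c \in C -> c \in S.
Proof. by rewrite /S /lside inE => ->. Qed.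

Lemma lside_bot : \bot \in S.
Proof. exact/mem_lside_Cl/Cl_bot. Qed.

Lemma lside_top : \top \in S.
Proof. exact/mem_lside_Cl/Cl_top. Qed.

Lemma lside_meet x y : x \in S -> y \in S -> x `&` y \in S.
Proof.
rewrite !mem_lside => /forall_inP nlx /forall_inP nly; apply/forall_inP => c cC.
apply/negP => cxy.
have lt_cx := lt_of_lam_le diagT cxy (leIl x y) (nlx c cC).
have lt_cy := lt_of_lam_le diagT cxy (leIr _ _) (nly c cC).
by move: (lam_nle diagT cxy); rewrite lexI (ltW lt_cx) (ltW lt_cy).
Qed.

Lemma lside_join x y : x \in S -> y \in S -> x `|` y \in S.
Proof.
rewrite !mem_lside => /forall_inP nlx /forall_inP nly; apply/forall_inP => c cC.
apply/negP => cxy.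
have lt_xc := lt_of_le_lam diagT (leUl x y) cxy (nlx c cC).
have lt_yc := lt_of_le_lam diagT (leUr _ _) cxy (nly c cC).
by move: (lam_nge diagT cxy); rewrite leUx (ltW lt_xc) (ltW lt_yc).
Qed.

Lemma lside_covA x y : covA S x y -> covA [set: T] x y.
Proof.
case/covAP=> xS yS lt_xy nz; apply/covAP; split; rewrite ?inE // => z _ lt_xz lt_zy.
have [zS|] := boolP (z \in S); first exact: nz lt_xz lt_zy.
rewrite mem_lside => /forall_inPn[c cC]; rewrite negbK => cz.
move: xS yS; rewrite !mem_lside => /forall_inP/(_ c cC) ncx /forall_inP/(_ c cC) ncy.
apply: (nz c (mem_lside_Cl cC)).
- exact: (lt_of_le_lam diagT (ltW lt_xz) cz ncx).
- exact: (lt_of_lam_le diagT cz (ltW lt_zy) ncy).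
Qed.

Lemma lside_L x : x \in S -> x \in L -> x \in C.
Proof.
rewrite /S /lside inE => /orP[//|/exists_inP[c /ClP[_ nlc] xc]] xL.
by move: (nlc x xL); rewrite xc.
Qed.

Lemma lside_semimodular : semimodular S.
Proof.
move=> a b c aS bS cS ab.
have := smT (in_setT a) (in_setT b) (in_setT c) (lside_covA ab).
case/orP=> [->//|abc]; apply/orP; right.
exact: covA_sub (subsetT S) (lside_join aS cS) (lside_join bS cS) abc.
Qed.

Lemma lside_two_lower_covers x a b e :
  covA S a x -> covA S b x -> covA S e x -> [|| a == b, a == e | b == e].
Proof.
move=> ax bx ex; apply/contraT; rewrite !negb_or => /and3P[neq_ab neq_ae neq_be].
have /and3P[aL bL _] := lower_covers_in_L (lside_covA ax) (lside_covA bx)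
  (lside_covA ex) neq_ab neq_ae neq_be.
have nle_ab := lower_covA_nle ax bx neq_ab.
have nle_ba : ~~ (b <= a) by apply: lower_covA_nle bx ax _; rewrite eq_sym.
case/orP: (Cl_comparable diagT (lside_L (covA_inl ax) aL) (lside_L (covA_inl bx) bL)).
- by rewrite (negbTE nle_ab).
- by rewrite (negbTE nle_ba).
Qed.

Lemma lside_cp_sublattice01 : cp_sublattice01 S.
Proof.
split; last exact: lside_covA.
by split; [exact: lside_bot | exact: lside_top | exact: lside_meet | exact: lside_join].
Qed.

Lemma lside_distributive : distributive_on S.
Proof.
exact: (distributive_of_two_lower_covers lside_bot lside_semimodular
  lside_meet lside_join lside_two_lower_covers).
Qed.

Lemma join_irr_lift p : p \in Jset L -> exists k,
  [/\ k \in Jset [set: T], k <= p & forall z, z \in L -> z < p -> ~~ (k <= z)].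
Proof.
rewrite inE => pj; have [o op below_o] := join_irr_lower_cover botL joinL pj.
have nle_po : ~~ (p <= o) by rewrite (lt_geF (covA_lt op)).
have [k [kj le_kp nle_ko]] := ex_join_irr_nle (in_setT p) nle_po.
exists k; split; rewrite ?inE // => z zL lt_zp.
by apply: contra nle_ko => le_kz; apply: le_trans le_kz (below_o z zL lt_zp).
Qed.

Lemma Jantichain3_L_setT : Jantichain3 L -> Jantichain3 [set: T].
Proof.
case=> p [q [r [pJ qJ rJ /and3P[pq pr qr]]]].
have [kp [kpJ le_kpp sep_p]] := join_irr_lift pJ.
have [kq [kqJ le_kqq sep_q]] := join_irr_lift qJ.
have [kr [krJ le_krr sep_r]] := join_irr_lift rJ.
have sep u v ku : u \in Jset L -> v \in Jset L -> u >< v ->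
    (forall z, z \in L -> z < u -> ~~ (ku <= z)) -> ~~ (ku <= u `&` v).
  rewrite !inE => /and3P[uL _ _] /and3P[vL _ _] uv sep_u.
  apply: sep_u (meetL uL vL) _; rewrite lt_def eq_sym eq_meetl leIl andbT.
  by case/norP: uv.
have [qp rp rq] : [/\ q >< p, r >< p & r >< q].
  by rewrite !(comparable_sym _ r) comparable_sym.
exists kp, kq, kr; split=> //; apply/and3P; split.
- exact: incomparable_of_nle_meet le_kpp le_kqq
    (sep _ _ _ pJ qJ pq sep_p) (sep _ _ _ qJ pJ qp sep_q).
- exact: incomparable_of_nle_meet le_kpp le_krr
    (sep _ _ _ pJ rJ pr sep_p) (sep _ _ _ rJ pJ rp sep_r).
- exact: incomparable_of_nle_meet le_kqq le_krr
    (sep _ _ _ qJ rJ qr sep_q) (sep _ _ _ rJ qJ rq sep_r).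
Qed.

Lemma Jantichain3_setT_L : Jantichain3 [set: T] -> Jantichain3 L.
Proof.
case=> p [q [r [pJ qJ rJ /and3P[pq pr qr]]]].
have [j [y [z [jJ yj jz]]]] := lam_middle diagT pJ qJ rJ pq pr qr.
have jj : join_irr [set: T] j by rewrite inE in jJ.
have [o oj below_o] := join_irr_lower_cover (in_setT _) (fun _ _ _ _ => in_setT _) jj.
have below_o' w : w < j -> w <= o := below_o w (in_setT w).
have [a oa aj] := ex_lam_upper_cover diagT smT jj oj below_o' yj.
have [c oc jc] := ex_lam_upper_cover (is_diagram_flip diagT) smT jj oj below_o' jz.
have [aw jw cw] := lam_upper_covers_join diagT smT oa oj oc aj jc.
have neq_aj := lam_neq diagT aj; have neq_jc := lam_neq diagT jc.
have neq_ac := lam_neq diagT (lam_trans diagT aj jc).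
have /and3P[aL jL cL] := lower_covers_in_L aw jw cw neq_aj neq_ac neq_jc.
have ajo := meet_upper_covA oa oj neq_aj (in_setT _).
have aco := meet_upper_covA oa oc neq_ac (in_setT _).
have jco := meet_upper_covA oj oc neq_jc (in_setT _).
have lift u : covA [set: T] o u -> u \in L ->
    exists k, [/\ k \in Jset L, k <= u & ~~ (k <= o)].
  move=> ou uL; have nle_uo : ~~ (u <= o) by rewrite (lt_geF (covA_lt ou)).
  by have [k [kj le_ku nle_ko]] := ex_join_irr_nle uL nle_uo; exists k; rewrite inE.
have [ka [kaJ le_kaa nle_kao]] := lift a oa aL.
have [kj [kjJ le_kjj nle_kjo]] := lift j oj jL.
have [kc [kcJ le_kcc nle_kco]] := lift c oc cL.
exists ka, kj, kc; split=> //; apply/and3P; split.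
- by apply: (incomparable_of_nle_meet le_kaa le_kjj); rewrite ?ajo // meetC ajo.
- by apply: (incomparable_of_nle_meet le_kaa le_kcc); rewrite ?aco // meetC aco.
- by apply: (incomparable_of_nle_meet le_kjj le_kcc); rewrite ?jco // meetC jco.
Qed.

Lemma slim_setT_L : slim [set: T] <-> slim L.
Proof.
split=> /(slimE diagT) noJ3; apply/(slimE diagT) => J3; apply: noJ3.
- exact: Jantichain3_L_setT.
- exact: Jantichain3_setT_L.
Qed.

End RectangularExtension.

Theorem mainTheorem4 (d : Order.disp_t) (T : finTBLatticeType d)
    (L : {set T}) (lam : rel T) :
  planar L -> semimodular L -> length_ge2 L ->
  rect_extension L ->
  is_diagram [set: T] lam ->
  let S := lside lam (Cl L lam) in
  (cp_sublattice01 S /\ distributive_on S) /\ (slim [set: T] <-> slim L).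
Proof.
move=> _ _ _ [[_ smT _] [[botL topL meetL joinL] covL] few] diagT S.
split; first split.
- exact: (lside_cp_sublattice01 diagT botL topL covL).
- exact: (lside_distributive diagT smT botL topL covL few).
- exact: (slim_setT_L diagT smT botL meetL joinL few).
Qed.
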